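(* Let $b\ge 2$ and $n\ge 0$ be integers. Then $\max \mathrm{Ap}(T_b(n),s_0) = w(s_0-(b-1))$, where $w(r)$ denotes the least element of $T_b(n)$ congruent to $r$ modulo $s_0$.
   Context: For integers $b\ge 2$, $n\ge 0$, $i\ge0$ put $s_i=(b+1)b^{n+i}-1$ and $T_b(n)=\langle\{s_i:i\in\mathbb{N}\}\rangle$ (a numerical semigroup). For a numerical semigroup $S$ and $x\in S\setminus\{0\}$, $\mathrm{Ap}(S,x)=\{s\in S: s-x\notin S\}$. *)

From mathcomp Require Import all_boot.
Set Implicit Arguments. Unset Strict Implicit. Unset Printing Implicit Defensive.

Definition sgen (b n i : nat) : nat := (b.+1) * b ^ (n + i) - 1.

(* T_b(n): the submonoid of (nat,+) generated by {s_i : i in N}, i.e. the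
   finite sums of generators (with repetition; empty sum = 0). *)
Definition inT (b n x : nat) : Prop :=
  exists l : seq nat, x = sumn (map (sgen b n) l).

(* Apery set Ap(S, a) = { s in S : s - a notin S } (s - a taken in Z). *)
Definition inAp (S : nat -> Prop) (a s : nat) : Prop :=
  S s /\ ~ (a <= s /\ S (s - a)).

Definition is_w (S : nat -> Prop) (d r m : nat) : Prop :=
  S m /\ m = r %[mod d] /\ (forall y, S y -> y = r %[mod d] -> m <= y).

Definition is_max (P : nat -> Prop) (m : nat) : Prop :=
  P m /\ (forall y, P y -> y <= m).

From mathcomp Require Import all_boot zify.
Set Implicit Arguments. Unset Strict Implicit. Unset Printing Implicit Defensive.

(* A sum of K generators s_(j_1) + ... + s_(j_K) equals (s_0 + 1) N - K with
   N = b^(j_1) + ... + b^(j_K), and N = K + (b - 1) m for some excess m.  Modulo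
   s_0 such an element is (b - 1) m, and b - 1 is prime to s_0, so it lies in the
   class of s_0 - (b - 1) iff s_0 divides m + 1.  The least element of that class
   therefore has excess s_0 - 1 and the least number K0 of terms compatible with
   it: K0 = b - 1 if n = 0 and K0 = 2 (b - 1) otherwise, as a computation modulo b
   of the non-unit powers shows.  Adding units b^0 and trading b^(j+1) for b
   copies of b^j writes w - e in this form for every e < s_0, so every integer
   above w - s_0 lies in T_b(n), and w is the maximum of the Apery set. *)

Definition sumpow (b K N : nat) : Prop :=
  exists2 l : seq nat, size l = K & sumn [seq b ^ j | j <- l] = N.

Section SumsOfPowers.
Variable b : nat.
Hypothesis hb : 1 < b.

Lemma sumpow0 : sumpow b 0 0.
Proof. by exists [::]. Qed.

Lemma sumpowD K1 N1 K2 N2 :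
  sumpow b K1 N1 -> sumpow b K2 N2 -> sumpow b (K1 + K2) (N1 + N2).
Proof.
by move=> [l1 <- <-] [l2 <- <-]; exists (l1 ++ l2); rewrite ?size_cat ?map_cat ?sumn_cat.
Qed.

Lemma sumpow_nseq k j : sumpow b k (k * b ^ j).
Proof.
exists (nseq k j); first exact: size_nseq.
by elim: k => //= k ->; rewrite mulSn.
Qed.

Lemma sumpow_le K N : sumpow b K N -> K <= N.
Proof.
move=> [l <- <-]; elim: l => //= j l IH.
by rewrite -add1n leq_add // expn_gt0 ltnW.
Qed.

Lemma sumpow_dvd K N : sumpow b K N -> (b - 1) %| N - K.
Proof.
move=> [l <- <-]; elim: l => //= j l IH.
have hl : size l <= sumn [seq b ^ i | i <- l] by apply: sumpow_le; exists l.
have hj : 0 < b ^ j by rewrite expn_gt0 ltnW.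
have -> : b ^ j + sumn [seq b ^ i | i <- l] - (size l).+1 =
          (b ^ j).-1 + (sumn [seq b ^ i | i <- l] - size l) by lia.
by rewrite dvdn_add // subn1 dvdn_pred_predX.
Qed.

Lemma sumpow_excess K N : sumpow b K N -> exists m, N = K + (b - 1) * m.
Proof.
move=> hKN; have /dvdnP [m hm] := sumpow_dvd hKN.
by exists m; rewrite mulnC -hm subnKC // sumpow_le.
Qed.

(* A power [b ^ j.+1] may be traded for [b] copies of [b ^ j]. *)
Lemma sumpow_split K N : sumpow b K N -> K < N -> sumpow b (K + (b - 1)) N.
Proof.
move=> [l <- <-]; elim: l => //= j l IH.
have hl : sumpow b (size l) (sumn [seq b ^ i | i <- l]) by exists l.
case: j => [|j] hlt.
- have := sumpowD (sumpow_nseq 1 0) (IH ltac:(lia)).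
  by rewrite expn0 !add1n addSn.
- have := sumpowD (sumpow_nseq b j) hl.
  by rewrite -mulnC -expnSr; congr sumpow; lia.
Qed.

Lemma sumpow_splitn K N d :
  sumpow b K N -> K + (b - 1) * d <= N -> sumpow b (K + (b - 1) * d) N.
Proof.
move=> hKN; elim: d => [|d IH] hle; first by rewrite muln0 addn0.
have -> : K + (b - 1) * d.+1 = K + (b - 1) * d + (b - 1) by rewrite mulnS; lia.
apply: sumpow_split; first by apply: IH; rewrite mulnS in hle; lia.
by rewrite mulnS in hle; lia.
Qed.

(* Separating the terms [b ^ 0]: the remaining ones are divisible by [b]. *)
Lemma sumpow_units K N :
  sumpow b K N -> exists2 c, c <= K & sumpow b (K - c) (N - c) /\ b %| N - c.
Proof.
move=> [l <- <-]; elim: l => [|j l [c hc [hrest hdvd]]] /=.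
  by exists 0 => //; split; [exact: sumpow0 | exact: dvdn0].
have hle : size l <= sumn [seq b ^ i | i <- l] by apply: sumpow_le; exists l.
case: j => [|j].
- by exists c.+1; rewrite // expn0 add1n !subSS.
- exists c; first lia.
  have hj := sumpowD (sumpow_nseq 1 j.+1) hrest.
  split; first by move: hj; rewrite mul1n; congr sumpow; lia.
  have -> : b ^ j.+1 + sumn [seq b ^ i | i <- l] - c =
            b ^ j.+1 + (sumn [seq b ^ i | i <- l] - c) by lia.
  by rewrite dvdn_add // expnS dvdn_mulr.
Qed.

Lemma sumpow_bound K N k : sumpow b K N -> N < b ^ k.+1 -> N <= K * b ^ k.
Proof.
move=> [l <- <-]; elim: l => //= j l IH hlt.
have hj : j <= k by rewrite -ltnS -(ltn_exp2l _ _ hb); lia.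
have := leq_pexp2l (ltnW hb) hj.
rewrite mulSn; have := IH ltac:(lia); lia.
Qed.

Lemma sumpow_count_lb0 K : sumpow b K (K + (b - 1) * (b - 1)) -> b - 1 <= K.
Proof.
move=> /sumpow_units [c le_cK [_]].
have -> : K + (b - 1) * (b - 1) - c = b * (b - 2) + (K - c).+1.
  have [a ->] : exists a, b = a.+2 by exists (b - 2); lia.
  rewrite !subSS subn0; nia.
rewrite dvdn_addr ?dvdn_mulr // => /(dvdn_leq (ltn0Sn _)); lia.
Qed.

Lemma sumpow_count_lbS K k :
  sumpow b K (K + (b - 1) * (b.+1 * b ^ k.+1 - 2)) -> (b - 1).*2 <= K.
Proof.
have [a b_eq] : exists a, b = a.+2 by exists (b - 2); lia.
have P_gt0 : 0 < b ^ k by rewrite expn_gt0 (ltnW hb).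
move=> /sumpow_units [c le_cK [hrest]].
have bound := sumpow_bound (k := k.+2) hrest.
move: bound P_gt0; rewrite !expnS b_eq !subSS subn0; set P := _ ^ k.
set t := a.+1 * _ => bound P_gt0.
have t_eq : t + a.+2 * 2 = 2 + a.+2 * (a.+1 * a.+3 * P) by rewrite /t; nia.
rewrite (_ : K + t - c = (K - c) + t); last by lia.
move=> dvd_b; have /dvdnP [[|[|w]] hw] : a.+2 %| (K - c).+2.
  have E : (K - c).+2 + a.+2 * (a.+1 * a.+3 * P) = (K - c + t) + a.+2 * 2 by lia.
  by rewrite -(dvdn_addl _ (dvdn_mulr (a.+1 * a.+3 * P) (dvdnn a.+2))) E dvdn_add // dvdn_mulr.
- by [].
- (* [b - 2] non-unit powers are too few to add up to the required sum. *)
  have j_eq : K - c = a by move: hw; rewrite mul1n; lia.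
  set Y := a.+1 * a.+3 * P.
  have sum_eq : K + t - c + a.+2 = a.+2 * Y by lia.
  have lt1 : Y < a.+2 * (a.+2 * P) by rewrite /Y; nia.
  have lt2 : (a * (a.+2 * P)).+1 < Y.
    have Y_eq : Y = a * (a.+2 * P) + (2 * a + 3) * P by rewrite /Y; nia.
    have : 3 * 1 <= (2 * a + 3) * P by rewrite leq_mul // leq_addl.
    lia.
  rewrite -(ltn_pmul2l (ltn0Sn a.+1)) in lt1.
  move: lt2; rewrite -(ltn_pmul2l (ltn0Sn a.+1)) => lt2.
  have := bound ltac:(lia); rewrite j_eq; lia.
- have : (2 * a.+2) * 1 <= w.+2 * a.+2 by rewrite muln1 leq_mul2r !ltnS leq0n orbT.
  lia.
Qed.
End SumsOfPowers.

Lemma is_max_inAp_of_is_w (S : nat -> Prop) a r m :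
  0 < a <= m -> is_w S a r m -> (forall z, m < z + a -> S z) ->
  is_max (inAp S a) m.
Proof.
move=> /andP [a_gt0 a_le] [Sm [m_mod m_min]] S_above; split.
- split=> // [[_ S_ma]].
  have : m <= m - a by apply: m_min; rewrite // -m_mod -{2}(subnK a_le) modnDr.
  lia.
- move=> y [_ not_S]; rewrite leqNgt; apply/negP => lt_my.
  by apply: not_S; split; [lia | apply: S_above; lia].
Qed.

Lemma dvdn_addn_lt d e : 0 < d -> exists2 p, p < d & d %| e + p.
Proof.
move=> d_gt0; exists ((d - e %% d) %% d); first exact: ltn_pmod.
by rewrite /dvdn modnDmr -modnDml subnKC ?modnn // ltnW // ltn_pmod.
Qed.

Section Apery.
Variables b n : nat.
Hypothesis hb : 1 < b.
Local Notation s := (sgen b n 0).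

Lemma sgen0S : s.+1 = b.+1 * b ^ n.
Proof. by rewrite /sgen addn0 subn1 prednK // muln_gt0 expn_gt0 (ltnW hb). Qed.

Lemma sgen0_pred : s.-1 = b.+1 * b ^ n - 2.
Proof. by rewrite -sgen0S subn2. Qed.

Lemma leq_sgen0 : b <= s.
Proof.
have : b.+1 * 1 <= b.+1 * b ^ n by rewrite leq_mul2l expn_gt0 ltnW.
by rewrite -sgen0S muln1.
Qed.

Lemma dvdn_sgen0_pred : (b - 1) %| s.-1.
Proof.
have -> : s.-1 = (b ^ n.+1).-1 + (b ^ n).-1.
  have := sgen0S; have := expn_gt0 b n; rewrite expnS mulSn (ltnW hb); lia.
by rewrite dvdn_add // subn1 dvdn_pred_predX.
Qed.

Lemma coprime_sgen0 : coprime s (b - 1).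
Proof.
have s_gt0 : 0 < s by apply: leq_trans leq_sgen0; lia.
have d_s := dvdn_gcdl s (b - 1).
have d_pred : gcdn s (b - 1) %| s.-1 by apply: dvdn_trans (dvdn_gcdr _ _) dvdn_sgen0_pred.
by rewrite /coprime -dvdn1; move: (dvdn_sub d_s d_pred); rewrite (_ : s - s.-1 = 1) //; lia.
Qed.

Lemma sumn_sgen l :
  sumn (map (sgen b n) l) + size l = s.+1 * sumn [seq b ^ j | j <- l].
Proof.
elim: l => [|j l IH] /=; first by rewrite muln0.
have : 0 < s.+1 * b ^ j by rewrite muln_gt0 expn_gt0 (ltnW hb).
rewrite mulnDr -IH [sgen b n j]/sgen sgen0S expnD mulnA; set X := _ * b ^ j; lia.
Qed.

Lemma inT_sumpowE x :
  inT b n x <-> exists K N, sumpow b K N /\ x + K = s.+1 * N.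
Proof.
split=> [[l ->] | [_ [_ [[l <- <-] hx]]]].
  by exists (size l), (sumn [seq b ^ j | j <- l]); split; [exists l | exact: sumn_sgen].
by exists l; have := sumn_sgen l; lia.
Qed.

Lemma sgen0_residue y K m :
  y + K = s.+1 * (K + (b - 1) * m) ->
  (y == s - (b - 1) %[mod s]) = (s %| m.+1).
Proof.
move=> hy; rewrite -(eqn_modDr (b - 1)) subnK ?modnn; last first.
  by apply: leq_trans leq_sgen0; lia.
have -> : y + (b - 1) = (K + (b - 1) * m) * s + (b - 1) * m.+1 by rewrite mulnS; nia.
by rewrite modnMDl -/(dvdn s _) Gauss_dvdr // coprime_sgen0.
Qed.

Lemma sgen0_gt1 : 1 < s.
Proof. exact: leq_trans hb leq_sgen0. Qed.

Lemma inT_addl y : inT b n y -> inT b n (s + y).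
Proof. by move=> [l ->]; exists (0 :: l). Qed.

Section MinimalCount.
Variable K0 : nat.
Hypotheses (sumpow_K0 : sumpow b K0 (K0 + (b - 1) * s.-1))
  (K0_min : forall K, sumpow b K (K + (b - 1) * s.-1) -> K0 <= K)
  (K0_le : K0 <= (b - 1).*2).

(* The element with [K0] terms and excess [s - 1]. *)
Local Notation M := (s * K0 + s.+1 * ((b - 1) * s.-1)).

Lemma inT_M_sub e : e < s -> inT b n (M - e).
Proof.
move=> lt_es.
(* [M - e] has [p] more units and [d] more splittings than [M], where
   [(b - 1) d = e + s p]. *)
have [p lt_p dvd_p] : exists2 p, p < b - 1 & b - 1 %| e + p.
  by apply: dvdn_addn_lt; rewrite subn_gt0.
have s_gt0 : 0 < s by apply: ltnW sgen0_gt1.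
have /dvdnP [d hd] : b - 1 %| e + s * p.
  have -> : e + s * p = (e + p) + s.-1 * p by rewrite -{1}(prednK s_gt0) mulSn; lia.
  by rewrite dvdn_add // dvdn_mulr // dvdn_sgen0_pred.
have lt_ds : d < s.
  rewrite -(ltn_pmul2r (leq_ltn_trans (leq0n p) lt_p)) -hd.
  apply: (@leq_trans (s * p.+1)); first by rewrite mulnS; lia.
  by rewrite leq_mul2l lt_p orbT.
apply/inT_sumpowE; exists (K0 + p + (b - 1) * d), (K0 + (b - 1) * s.-1 + p); split.
  apply: (sumpow_splitn hb).
    by move: (sumpowD sumpow_K0 (sumpow_nseq b p 0)); rewrite expn0 muln1.
  have : (b - 1) * d <= (b - 1) * s.-1 by rewrite leq_mul2l -ltnS prednK // lt_ds orbT.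
  lia.
have : e <= M by have := sgen0_gt1; nia.
move: lt_es hd; rewrite -(prednK s_gt0); set t := s.-1; nia.
Qed.

Lemma sgen0_le_M : s <= M.
Proof. by have := sgen0_gt1; nia. Qed.

Lemma inT_above z : M < z + s -> inT b n z.
Proof.
elim/ltn_ind: z => z IH lt_Mz.
have [le_zM | lt_Mz'] := leqP z M.
  by rewrite -(subKn le_zM); apply: inT_M_sub; lia.
have le_sz : s <= z by have := sgen0_le_M; lia.
rewrite -(subnKC le_sz); apply/inT_addl/IH; have := sgen0_gt1; lia.
Qed.

Lemma M_residue : M = s - (b - 1) %[mod s].
Proof.
apply/eqP; rewrite (sgen0_residue (K := K0) (m := s.-1)).
  by rewrite prednK ?dvdnn // ltnW // sgen0_gt1.
by rewrite mulnDr mulSn; lia.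
Qed.

Lemma M_min y : inT b n y -> y = s - (b - 1) %[mod s] -> M <= y.
Proof.
move=> /inT_sumpowE [K [N [hKN hy]]] /eqP y_mod.
have [m hm] := sumpow_excess hb hKN; subst N.
have /dvdnP [w hw] : s %| m.+1 by rewrite -(sgen0_residue hy).
have -> : y = s * K + s.+1 * ((b - 1) * m) by move: hy; rewrite mulnDr mulSn; lia.
case: w hw => [|[|w]] hw //.
- have hmK : m = s.-1 by rewrite mul1n in hw; rewrite -hw.
  subst m; rewrite leq_add2r leq_mul2l K0_min ?orbT //.
- (* An excess of at least [2 s - 1] outweighs the at most [2 (b - 1)] terms. *)
  have m_ge : s.-1 + s <= m by move: hw; rewrite !mulSn; have := sgen0_gt1; lia.
  have K0_s : s * K0 <= s.+1 * ((b - 1) * s).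
    have le : K0 <= (b - 1) * s.+1.
      by apply: leq_trans K0_le _; rewrite -muln2 leq_mul2l ltnS (ltnW sgen0_gt1) orbT.
    by apply: leq_trans (leq_mul (leqnn s) le) _; lia.
  have : s.+1 * ((b - 1) * (s.-1 + s)) <= s.+1 * ((b - 1) * m).
    by rewrite !leq_mul2l m_ge !orbT.
  rewrite !mulnDr; lia.
Qed.

Lemma w_is_max_Ap : exists m : nat,
  is_w (inT b n) s (s - (b - 1)) m /\ is_max (inAp (inT b n) s) m.
Proof.
have w_M : is_w (inT b n) s (s - (b - 1)) M.
  split; first by rewrite -(subn0 M); apply: inT_M_sub; apply: ltnW sgen0_gt1.
  by split; [exact: M_residue | exact: M_min].
exists M; split => //; apply: is_max_inAp_of_is_w w_M inT_above.
by rewrite sgen0_le_M ltnW // sgen0_gt1.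
Qed.

End MinimalCount.
End Apery.

Theorem mainTheorem8 (b n : nat) (hb : 2 <= b) :
  exists m : nat,
    is_w (inT b n) (sgen b n 0) (sgen b n 0 - (b - 1)) m /\
    is_max (inAp (inT b n) (sgen b n 0)) m.
Proof.
case: n => [|k].
- apply: (@w_is_max_Ap b 0 hb (b - 1)); rewrite ?(@sgen0_pred b 0 hb) ?expn0 ?muln1.
  + have -> : b - 1 + (b - 1) * (b.+1 - 2) = (b - 1) * b ^ 1 by rewrite expn1; nia.
    exact: sumpow_nseq.
  + by move=> K; rewrite (_ : b.+1 - 2 = b - 1); [exact: (sumpow_count_lb0 hb) | lia].
  + by rewrite -addnn leq_addr.
- apply: (@w_is_max_Ap b k.+1 hb (b - 1).*2); rewrite ?(@sgen0_pred b k.+1 hb) //.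
  + rewrite -addnn (_ : _ + _ * _ = (b - 1) * b ^ k.+2 + (b - 1) * b ^ k.+1).
      exact: sumpowD (sumpow_nseq _ _ _) (sumpow_nseq _ _ _).
    have := expn_gt0 b k.+1; rewrite (expnS _ k.+1) (ltnW hb) /=; nia.
  + by move=> K; exact: (sumpow_count_lbS hb).
Qed.
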